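(* Let $G$ be a graph, let $s\ge3$ be an integer, and let $xTy$ be a thread of $G$ (possibly $x=y$, when $T$ is a cycle-thread). Let $T'$ be the path obtained from $T$ by deleting its end-vertices $x,y$ (for a cycle-thread, by deleting the single vertex $x=y$), and let $G'=G-V(T')$. Then: (a1) if $s\ge4$ and $e(T)\ge 4$, then $\lambda(G')\ge v(G')/(s+1)$ implies $\lambda(G)\ge v(G)/(s+1)$; (a2) if $s=3$ and $v(T')\in\{3m,3m+1\}$ for some integer $m\ge1$, then $\lambda(G')\ge v(G')/4$ implies $\lambda(G)\ge v(G)/4$.
   Context: All graphs are finite and simple. $v(G)$, $e(G)$ are the numbers of vertices and edges. $\lambda(G)$ denotes the maximum number of pairwise vertex-disjoint subgraphs of $G$ each of which is a path with exactly two edges. A path-thread of $G$ is a path $P$ in $G$, maximal under inclusion among paths, such that every internal vertex of $P$ has degree $2$ in $G$; its end-vertices are $x,y$, written $xPy$. A cycle-thread of $G$ is a cycle $C$ of $G$ in which all vertices except exactly one have degree $2$ in $G$; both ''end-vertices'' $x=y$ of it are this exceptional vertex. A thread is a path-thread or a cycle-thread. *)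

(* A graph G is given by a finite type T, a symmetric
   irreflexive adjacency relation e : rel T, and a vertex set V : {set T};
   G is the subgraph of (T,e) induced on V. *)
From mathcomp Require Import all_boot.
Set Implicit Arguments. Unset Strict Implicit. Unset Printing Implicit Defensive.

Section Graphs.
Variables (T : finType) (e : rel T).

Definition deg (V : {set T}) (x : T) : nat := #|[set y in V | e x y]|.

Definition gpath (V : {set T}) (p : seq T) : bool :=
  match p with
  | [::] => false
  | x :: q => [&& path e x q, uniq p & all (fun v => v \in V) p]
  end.

Definition path_interior (p : seq T) : seq T := drop 1 (take (size p).-1 p).

Definition deg2_path (V : {set T}) (p : seq T) : bool :=
  gpath V p && all (fun v => deg V v == 2) (path_interior p).

(* path-thread: a deg2_path maximal under inclusion among such paths
   (a path contained in a path is a contiguous segment of it, read in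
   one of the two directions) *)
Definition path_thread (V : {set T}) (p : seq T) : Prop :=
  deg2_path V p /\
  forall q, deg2_path V q -> infix p q || infix (rev p) q -> size q <= size p.

(* cycle-thread, given as x :: q where x is the exceptional vertex:
   x :: q is a cycle of G (at least 3 vertices, consecutive vertices and
   last/first adjacent), deg x <> 2 and every other vertex has degree 2 *)
Definition cycle_thread (V : {set T}) (c : seq T) : Prop :=
  match c with
  | [::] => False
  | x :: q => [/\ 3 <= size c, gpath V c, e (last x q) x,
                 deg V x != 2 & all (fun v => deg V v == 2) q]
  end.

Definition thread (V : {set T}) (t : seq T) (b : bool) : Prop :=
  if b then cycle_thread V t else path_thread V t.

Definition thread_interior (t : seq T) (b : bool) : seq T :=
  if b then behead t else path_interior t.

Definition thread_edges (t : seq T) (b : bool) : nat :=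
  if b then size t else (size t).-1.

Definition del_interior (V : {set T}) (t : seq T) (b : bool) : {set T} :=
  V :\: [set v in thread_interior t b].

(* lambda(G): maximum number of pairwise vertex-disjoint 2-edge paths *)
Definition is_P3 (V : {set T}) (t : T * T * T) : bool :=
  [&& t.1.1 \in V, t.1.2 \in V, t.2 \in V, t.1.1 != t.2,
      e t.1.1 t.1.2 & e t.1.2 t.2].

Definition p3verts (t : T * T * T) : {set T} := [set t.1.1; t.1.2; t.2].

Definition p3packing (V : {set T}) (P : {set T * T * T}) : bool :=
  [forall t in P, is_P3 V t] &&
  [forall t in P, forall u in P, (t != u) ==> [disjoint p3verts t & p3verts u]].

Definition lambda (V : {set T}) : nat :=
  \max_(P : {set T * T * T} | p3packing V P) #|P|.

End Graphs.

(* The interior T' of a thread is a path of G.  Cutting it into consecutive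
   triples yields floor(v(T')/3) vertex-disjoint 2-edge paths lying in T', and
   these can be added to any packing of G' = G - V(T').  Hence
   lambda(G) >= lambda(G') + floor(v(T')/3) while v(G) = v(G') + v(T'), and it
   only remains to check v(T') <= (s+1) floor(v(T')/3): for s >= 4 this needs
   v(T') >= 3, i.e. e(T) >= 4, and for s = 3 it is exactly v(T') = 0, 1 mod 3. *)
From mathcomp Require Import all_boot zify.

Set Implicit Arguments.
Unset Strict Implicit.
Unset Printing Implicit Defensive.

Section P3Packings.
Variables (T : finType) (e : rel T).

Lemma p3verts_subset (A : {set T}) (t : T * T * T) :
  is_P3 e A t -> p3verts t \subset A.
Proof.
case/and5P => t1A t2A t3A _ _; apply/subsetP => v.
by rewrite !inE -orbA => /or3P [] /eqP ->.
Qed.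

Lemma is_P3_subset (A B : {set T}) (t : T * T * T) :
  A \subset B -> is_P3 e A t -> is_P3 e B t.
Proof.
move=> /subsetP AB /and5P [t1A t2A t3A t13 e123].
by apply/and5P; split=> //; apply: AB.
Qed.

Lemma p3packingP (A : {set T}) (P : {set T * T * T}) :
  reflect ({in P, forall t, is_P3 e A t} /\
           {in P &, forall t u, t != u -> [disjoint p3verts t & p3verts u]})
          (p3packing e A P).
Proof.
apply: (iffP andP) => [[/forall_inP P3P /forall_inP disjP] | [P3P disjP]].
  by split=> // t u tP uP; move/forall_inP/(_ u uP)/implyP: (disjP t tP).
split; apply/forall_inP => // t tP.
by apply/forall_inP => u uP; apply/implyP; apply: disjP.
Qed.

Lemma p3packing_subset (A B : {set T}) (P : {set T * T * T}) :
  A \subset B -> p3packing e A P -> p3packing e B P.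
Proof.
move=> AB /p3packingP [P3P disjP]; apply/p3packingP; split=> // t tP.
exact: is_P3_subset (P3P t tP).
Qed.

Lemma p3packingU (A B : {set T}) (P Q : {set T * T * T}) :
  [disjoint A & B] -> p3packing e A P -> p3packing e B Q ->
  p3packing e (A :|: B) (P :|: Q) /\ #|P :|: Q| = #|P| + #|Q|.
Proof.
move=> AB /p3packingP [P3P disjP] /p3packingP [P3Q disjQ].
have disjPQ t u : t \in P -> u \in Q -> [disjoint p3verts t & p3verts u].
  by move=> tP uQ; apply: disjointW AB; apply: p3verts_subset; [apply: P3P | apply: P3Q].
split.
  apply/p3packingP; split=> [t | t u].
    by case/setUP=> [/P3P | /P3Q]; apply: is_P3_subset; rewrite ?subsetUl ?subsetUr.
  case/setUP=> [tP | tQ] /setUP [uP | uQ].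
  - exact: disjP.
  - by rewrite disjPQ.
  - by rewrite disjoint_sym disjPQ.
  - exact: disjQ.
suff PQ0 : P :&: Q = set0 by rewrite cardsU PQ0 cards0 subn0.
apply/setP => t; rewrite !inE; apply/andP => -[tP tQ].
have /disjoint_setI0 := disjPQ t t tP tQ; rewrite setIid => /setP/(_ t.1.1).
by rewrite !inE eqxx.
Qed.

Lemma lambda_ge (A : {set T}) (P : {set T * T * T}) :
  p3packing e A P -> #|P| <= lambda e A.
Proof. exact: (@leq_bigmax_cond _ (p3packing e A) (fun P => #|P|)). Qed.

Lemma lambda_witness (A : {set T}) :
  exists2 P, p3packing e A P & #|P| = lambda e A.
Proof.
have packing0 : p3packing e A set0 by apply/p3packingP; split=> t; rewrite inE.
have nonempty : 0 < #|p3packing e A| by apply/card_gt0P; exists set0.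
have [P AP maxP] := @eq_bigmax_cond _ (p3packing e A) (fun P => #|P|) nonempty.
by exists P; last exact: esym maxP.
Qed.

Lemma lambda_subset (A B : {set T}) : A \subset B -> lambda e A <= lambda e B.
Proof.
move=> AB; have [P AP <-] := lambda_witness A.
by apply: lambda_ge; apply: p3packing_subset AP.
Qed.

Lemma lambdaU (A B : {set T}) :
  [disjoint A & B] -> lambda e A + lambda e B <= lambda e (A :|: B).
Proof.
move=> AB; have [P AP <-] := lambda_witness A; have [Q BQ <-] := lambda_witness B.
by have [ABPQ <-] := p3packingU AB AP BQ; apply: lambda_ge.
Qed.

Lemma lambda_P3 (A : {set T}) (t : T * T * T) : is_P3 e A t -> 0 < lambda e A.
Proof.
move=> P3t; apply: leq_trans (lambda_ge (P := [set t]) _); first by rewrite cards1.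
by apply/p3packingP; split=> [u /set1P -> | u v /set1P -> /set1P ->] //; rewrite eqxx.
Qed.

Lemma lambda_sorted (p : seq T) :
  sorted e p -> uniq p -> size p %/ 3 <= lambda e [set v in p].
Proof.
have [n] := ubnP (size p); elim: n p => // n IH [|a [|b [|c r]]] //= size_p.
case/and3P=> eab ebc /path_sorted r_sorted.
case/and4P; rewrite !inE !negb_or => /and3P [_ ac ar] /andP [_ br] cr r_uniq.
have abc_r : [disjoint [set a; b; c] & [set v in r]].
  apply/pred0P => v /=; rewrite !inE -orbA.
  by apply/negP => /andP [/or3P [] /eqP -> vr]; rewrite vr in ar br cr.
have -> : (size r).+3 %/ 3 = 1 + size r %/ 3.
  by rewrite -[(size r).+3]/(1 * 3 + size r) divnMDl.
have abcr_p : [set a; b; c] :|: [set v in r] \subset [set v in [:: a, b, c & r]].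
  by apply/subsetP => v; rewrite !inE -!orbA.
apply: leq_trans (leq_trans (lambdaU abc_r) (lambda_subset abcr_p)).
apply: leq_add; last by apply: IH => //; lia.
by apply: (@lambda_P3 _ (a, b, c)); rewrite /is_P3 /= !inE !eqxx ac eab ebc !orbT.
Qed.

Lemma lambda_setD_sorted (V : {set T}) (p : seq T) :
  sorted e p -> uniq p -> {subset p <= V} ->
  lambda e (V :\: [set v in p]) + size p %/ 3 <= lambda e V.
Proof.
move=> p_sorted p_uniq pV; set S := [set v in p].
have VS_S : [disjoint V :\: S & S] by rewrite disjoints_subset setDE subsetIr.
have VS_SV : (V :\: S) :|: S \subset V.
  by rewrite subUset subsetDl; apply/subsetP => v; rewrite inE; apply: pV.
apply: leq_trans (leq_trans (lambdaU VS_S) (lambda_subset VS_SV)).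
by rewrite leq_add2l lambda_sorted.
Qed.

End P3Packings.

Section Threads.
Variables (T : finType) (e : rel T).

Lemma thread_gpath (V : {set T}) (t : seq T) (b : bool) :
  thread e V t b -> gpath e V t.
Proof. by case: b => [|[/andP []]] //; case: t => // x q []. Qed.

Lemma thread_interior_sorted (V : {set T}) (t : seq T) (b : bool) :
  gpath e V t -> let p := thread_interior t b in
  [/\ sorted e p, uniq p & {subset p <= V}].
Proof.
have [k ->] : exists k, thread_interior t b = drop 1 (take k t).
  by case: b; [exists (size t); rewrite take_size drop1 | exists (size t).-1].
case: t => // x q /and3P [xq_path xq_uniq /allP xqV]; split.
- by apply/drop_sorted/take_sorted.
- by apply/drop_uniq/take_uniq.
- by move=> v /mem_drop /mem_take; apply: xqV.
Qed.

Lemma size_thread_interior (t : seq T) (b : bool) :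
  size (thread_interior t b) = (thread_edges t b).-1.
Proof.
case: b; first by rewrite /= size_behead.
by rewrite /= size_drop size_takel ?leq_pred // subn1.
Qed.

End Threads.

Lemma card_setD_seq (T : finType) (V : {set T}) (p : seq T) :
  uniq p -> {subset p <= V} -> #|V| = #|V :\: [set v in p]| + size p.
Proof.
move=> p_uniq pV; rewrite -(cardsID [set v in p] V) addnC; congr (_ + _).
rewrite (setIidPr _); last by apply/subsetP => v; rewrite inE; apply: pV.
by rewrite cardsE; apply/card_uniqP.
Qed.

Lemma leq_add_mul (c n k l' l : nat) :
  n <= c * l' -> k <= c * (k %/ 3) -> l' + k %/ 3 <= l -> n + k <= c * l.
Proof.
move=> n_le k_le l_le; apply: leq_trans (leq_add n_le k_le) _.
by rewrite -mulnDr leq_mul2l l_le orbT.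
Qed.

Theorem lemma3p1 (T : finType) (e : rel T) (V : {set T}) (s : nat)
    (t : seq T) (b : bool) :
  symmetric e -> irreflexive e -> 3 <= s -> thread e V t b ->
  let V' := del_interior V t b in
  ((4 <= s -> 4 <= thread_edges t b ->
    #|V'| <= s.+1 * lambda e V' -> #|V| <= s.+1 * lambda e V) /\
   (s = 3 ->
    (exists m, 1 <= m /\ (size (thread_interior t b) = 3 * m \/
                           size (thread_interior t b) = 3 * m + 1)) ->
    #|V'| <= 4 * lambda e V' -> #|V| <= 4 * lambda e V)).
Proof.
move=> _ _ _ /thread_gpath/(thread_interior_sorted b) [p_sorted p_uniq pV] V'.
have card_V : #|V| = #|V'| + size (thread_interior t b) by apply: card_setD_seq.
have lambda_V := lambda_setD_sorted p_sorted p_uniq pV.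
split=> [s_ge4 edges_ge4 | _ [m [m_ge1 size_p]]] V'_bound; rewrite card_V;
  apply: leq_add_mul V'_bound _ lambda_V.
- have := size_thread_interior t b; set k := size _ => size_p.
  by apply: leq_trans (_ : k <= 5 * (k %/ 3)) _; [lia | rewrite leq_mul2r ltnS s_ge4 orbT].
- by case: size_p => ->; lia.
Qed.
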